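(* For integers $s_1,s_2>0$ and $r_1,r_2\ge0$ (writing $\binom{a}{b}$ for binomial coefficients and $[\,\cdot\,]$ for bi-brackets, and $B_k$ for Bernoulli numbers with $\frac{X}{e^X-1}=\sum_k\frac{B_k}{k!}X^k$): (i) \begin{align*} \left[\begin{matrix}s_1\\ r_1\end{matrix}\right]\left[\begin{matrix}s_2\\ r_2\end{matrix}\right] =&\left[\begin{matrix}s_1,s_2\\ r_1,r_2\end{matrix}\right]+\left[\begin{matrix}s_2,s_1\\ r_2,r_1\end{matrix}\right]+\binom{r_1+r_2}{r_1}\left[\begin{matrix}s_1+s_2\\ r_1+r_2\end{matrix}\right]\\ &+\binom{r_1+r_2}{r_1}\sum_{j=1}^{s_1}\frac{(-1)^{s_2-1}B_{s_1+s_2-j}}{(s_1+s_2-j)!}\binom{s_1+s_2-j-1}{s_1-j}\left[\begin{matrix}j\\ r_1+r_2\end{matrix}\right]\\ &+\binom{r_1+r_2}{r_1}\sum_{j=1}^{s_2}\frac{(-1)^{s_1-1}B_{s_1+s_2-j}}{(s_1+s_2-j)!}\binom{s_1+s_2-j-1}{s_2-j}\left[\begin{matrix}j\\ r_1+r_2\end{matrix}\right]; \end{align*} (ii) \begin{align*} \left[\begin{matrix}s_1\\ r_1\end{matrix}\right]\left[\begin{matrix}s_2\\ r_2\end{matrix}\right] =&\sum_{\substack{1\le j\le s_1\\ 0\le k\le r_2}}\binom{s_1+s_2-j-1}{s_1-j}\binom{r_1+r_2-k}{r_1}(-1)^{r_2-k}\left[\begin{matrix}s_1+s_2-j,\ j\\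 k,\ r_1+r_2-k\end{matrix}\right]\\ &+\sum_{\substack{1\le j\le s_2\\ 0\le k\le r_1}}\binom{s_1+s_2-j-1}{s_1-1}\binom{r_1+r_2-k}{r_1-k}(-1)^{r_1-k}\left[\begin{matrix}s_1+s_2-j,\ j\\ k,\ r_1+r_2-k\end{matrix}\right]\\ &+\binom{s_1+s_2-2}{s_1-1}\left[\begin{matrix}s_1+s_2-1\\ r_1+r_2+1\end{matrix}\right]\\ &+\binom{s_1+s_2-2}{s_1-1}\sum_{j=0}^{r_1}\frac{(-1)^{r_2}B_{r_1+r_2-j+1}}{(r_1+r_2-j+1)!}\binom{r_1+r_2-j}{r_1-j}\left[\begin{matrix}s_1+s_2-1\\ j\end{matrix}\right]\\ &+\binom{s_1+s_2-2}{s_1-1}\sum_{j=0}^{r_2}\frac{(-1)^{r_1}B_{r_1+r_2-j+1}}{(r_1+r_2-j+1)!}\binom{r_1+r_2-j}{r_2-j}\left[\begin{matrix}s_1+s_2-1\\ j\end{matrix}\right]. \end{align*}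
   Context: For integers $s_1,\dots,s_l\ge1$ and $r_1,\dots,r_l\ge0$ the bi-bracket is \[ \left[\begin{matrix}s_1,\dots,s_l\\ r_1,\dots,r_l\end{matrix}\right]:=\sum_{\substack{u_1>\dots>u_l>0\\ v_1,\dots,v_l>0}}\prod_{j=1}^{l}\frac{u_j^{r_j}}{r_j!}\,\frac{v_j^{s_j-1}}{(s_j-1)!}\;q^{u_1v_1+\dots+u_lv_l}\in\mathbb{Q}[[q]]. \] *)

From mathcomp Require Import all_boot all_order all_algebra.
Set Implicit Arguments. Unset Strict Implicit. Unset Printing Implicit Defensive.
Import Order.TTheory GRing.Theory Num.Theory.
Local Open Scope ring_scope.

(* A formal power series in Q[[q]], represented by its coefficient sequence:
   f n is the coefficient of q^n. *)
Definition qseries := nat -> rat.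

Definition qmul (f g : qseries) : qseries :=
  fun n => \sum_(i < n.+1) f i * g (n - i)%N.

(* Since u_j, v_j >= 1 and sum u_j v_j = N, all u_j, v_j lie in [1, N], so
   the sum may be taken over u, v : 'I_l -> 'I_(N+1). *)
Definition bibracket (s r : seq nat) : qseries :=
  fun N =>
  \sum_(u : {ffun 'I_(size s) -> 'I_N.+1})
  \sum_(v : {ffun 'I_(size s) -> 'I_N.+1}
        | [&& [forall i : 'I_(size s), 0 < (u i : nat)]%N,
              [forall i : 'I_(size s), 0 < (v i : nat)]%N,
              [forall i : 'I_(size s), forall j : 'I_(size s), (i < j)%N ==> (u j < u i)%N] &
              (\sum_(i < size s) (u i : nat) * (v i : nat))%N == N])
    \prod_(i < size s)
       (((u i : nat) ^ nth 0%N r i)%:R / ((nth 0%N r i)`!)%:R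
        * ((v i : nat) ^ (nth 0%N s i).-1)%:R / (((nth 0%N s i).-1)`!)%:R).

(* Comparing
   coefficients in ((e^X-1)/X) * sum_k B_k X^k/k! = 1 gives
   sum_(k<=n) B_k/(k! (n-k+1)!) = [n == 0], i.e. B_0 = 1 and
   B_n = - n! * sum_(k<n) B_k / (k! (n-k+1)!) for n >= 1. *)
Fixpoint bern_upto (n : nat) : seq rat :=
  match n with
  | 0 => [:: 1]
  | n'.+1 =>
      let s := bern_upto n' in
      rcons s (- (n`!)%:R *
               \sum_(k < n) s`_k / ((k`!)%:R * (((n - k).+1)`!)%:R))
  end.

Definition bernoulli (n : nat) : rat := (bern_upto n)`_n.

(* The coefficient of q^N in [s; r] is the sum of u^r/r! v^(s-1)/(s-1)! over u v = N,
   so the product of two depth-one brackets is a sum over u1 v1 + u2 v2 = N.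

   For (i), split this range according to u1 > u2, u1 < u2 and u1 = u2.  The first two
   pieces are depth-two brackets.  On the diagonal u1 = u2 = u, with m = v1 + v2, one is
   left with the convolution L(a,b)(m) = sum_(0 < v < m) v^a/a! (m-v)^b/b!, which equals an
   explicit polynomial in m with Bernoulli coefficients.  Both satisfy the recursion
   m L(a,b) = (a+1) L(a+1,b) + (b+1) L(a,b+1), so it suffices to treat b = 0, where the
   identity is Faulhaber's formula combined with B_n = (-1)^n B_n for n <> 1.

   For (ii), split according to v1 and v2 instead.  After the change of variables
   (u1, u2, v1, v2) -> (u1 + u2, u1, v2, v1 - v2) and binomial expansion of
   (u1 - u2)^r and (v1 + v2)^(s-1), the off-diagonal pieces become depth-two brackets,
   while the diagonal v1 = v2 gives the same convolution with u and v exchanged. *)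

From mathcomp Require Import all_boot all_order all_algebra.
From mathcomp Require Import ring lra zify.
Import Order.TTheory GRing.Theory Num.Theory.
Set Implicit Arguments. Unset Strict Implicit. Unset Printing Implicit Defensive.
Local Open Scope ring_scope.

Section DividedPowers.
Variable R : numFieldType.

Definition dpow (n : nat) (x : R) : R := x ^+ n / (n`!)%:R.

Lemma natr_fact_neq0 n : (n`!)%:R != 0 :> R.
Proof. by rewrite pnatr_eq0 -lt0n fact_gt0. Qed.

Lemma natr_bin_neq0 n k : (k <= n)%N -> ('C(n, k))%:R != 0 :> R.
Proof. by move=> kn; rewrite pnatr_eq0 -lt0n bin_gt0. Qed.

Lemma dpow0 x : dpow 0 x = 1.
Proof. by rewrite /dpow expr0 fact0 divr1. Qed.

Lemma dpow_at0 n : dpow n 0 = (n == 0)%N%:R.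
Proof. by case: n => [|n]; rewrite ?dpow0 // /dpow expr0n mul0r. Qed.

Lemma dpow1 n : dpow n 1 = (n`!)%:R^-1.
Proof. by rewrite /dpow expr1n div1r. Qed.

Lemma dpowN n x : dpow n (- x) = (-1) ^+ n * dpow n x.
Proof. by rewrite /dpow -[- x]mulN1r exprMn mulrA. Qed.

Lemma dpowD n x y : dpow n (x + y) = \sum_(i < n.+1) dpow i x * dpow (n - i) y.
Proof.
rewrite /dpow addrC exprDn mulr_suml; apply: eq_bigr => i _.
have le_in : (i <= n)%N by rewrite -ltnS.
rewrite -mulr_natr -(bin_fact le_in) !natrM.
by field; rewrite !natr_fact_neq0 natr_bin_neq0.
Qed.

Lemma dpowM p q x : dpow p x * dpow q x = ('C(p + q, p))%:R * dpow (p + q) x.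
Proof.
have le_pq : (p <= p + q)%N by rewrite leq_addr.
rewrite /dpow exprD -(bin_fact le_pq) !natrM addKn.
by field; rewrite !natr_fact_neq0 natr_bin_neq0.
Qed.

Lemma mulr_dpow n x : x * dpow n x = (n.+1)%:R * dpow n.+1 x.
Proof.
rewrite /dpow factS natrM exprS; field.
by rewrite natr_fact_neq0 addrC natr1 pnatr_eq0.
Qed.

End DividedPowers.

Definition qone : qseries := fun n => (n == 0)%N%:R.
Definition qshift (f : qseries) : qseries := fun n => if n is n'.+1 then f n' else 0.
Definition qsign (f : qseries) : qseries := fun n => (-1) ^+ n * f n.
Definition qexp (x : rat) : qseries := fun n => dpow n x.
Definition qtrunc (f : qseries) (D : nat) : {poly rat} := \poly_(i < D) f i.

Lemma coef_qtrunc f D i : (i < D)%N -> (qtrunc f D)`_i = f i.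
Proof. by move=> lt_iD; rewrite coef_poly lt_iD. Qed.

Lemma qmul_qtrunc f g D n : (n < D)%N -> qmul f g n = (qtrunc f D * qtrunc g D)`_n.
Proof.
move=> lt_nD; rewrite coefM; apply: eq_bigr => i _.
have le_in : (i <= n)%N by rewrite -ltnS.
by rewrite !coef_qtrunc //; apply: leq_ltn_trans lt_nD; rewrite ?leq_subr.
Qed.

Lemma eq_qmul f f' g g' : f =1 f' -> g =1 g' -> qmul f g =1 qmul f' g'.
Proof. by move=> ff' gg' n; apply: eq_bigr => i _; rewrite ff' gg'. Qed.

Lemma qmulC f g : qmul f g =1 qmul g f.
Proof. by move=> n; rewrite !(qmul_qtrunc _ _ (ltnSn n)) mulrC. Qed.

Lemma qmulA f g h : qmul f (qmul g h) =1 qmul (qmul f g) h.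
Proof.
have qtruncM u v D : forall k, (k < D)%N ->
    (qtrunc (qmul u v) D)`_k = (qtrunc u D * qtrunc v D)`_k.
  by move=> k lt_kD; rewrite coef_qtrunc // (qmul_qtrunc _ _ lt_kD).
have coefM_low (p q q' : {poly rat}) n : (forall k, (k < n.+1)%N -> q`_k = q'`_k) ->
    (p * q)`_n = (p * q')`_n.
  by move=> qq'; rewrite !coefM; apply: eq_bigr => i _; rewrite qq' // ltnS leq_subr.
move=> n; rewrite !(qmul_qtrunc _ _ (ltnSn n)) (coefM_low _ _ _ _ (qtruncM g h _)).
by rewrite [qtrunc (qmul f g) _ * _]mulrC (coefM_low _ _ _ _ (qtruncM f g _)) mulrA mulrC.
Qed.

Lemma qmulDr f g h : qmul f (fun n => g n + h n) =1 (fun n => qmul f g n + qmul f h n).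
Proof. by move=> n; rewrite -big_split; apply: eq_bigr => i _; rewrite mulrDr. Qed.

Lemma qmulr1 f : qmul f qone =1 f.
Proof.
move=> n; rewrite /qmul big_ord_recr /= subnn mulr1 big1 ?add0r // => i _.
by rewrite /qone subn_eq0 leqNgt ltn_ord mulr0.
Qed.

Lemma qmul_qshift f g n : qmul f (qshift g) n.+1 = qmul f g n.
Proof.
rewrite /qmul big_ord_recr /= subnn mulr0 addr0.
by apply: eq_bigr => i _; rewrite subSn // -ltnS.
Qed.

Lemma qmul_qsign f g : qmul (qsign f) (qsign g) =1 qsign (qmul f g).
Proof.
move=> n; rewrite /qsign /qmul mulr_sumr; apply: eq_bigr => i _.
have le_in : (i <= n)%N by rewrite -ltnS.
have -> : (-1) ^+ n = (-1) ^+ i * (-1) ^+ (n - i) :> rat by rewrite -exprD subnKC.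
ring.
Qed.

Lemma qmulIf (a f g : qseries) : a 0%N != 0 ->
  qmul f a =1 qmul g a -> f =1 g.
Proof.
move=> a0 fg n; elim/ltn_ind: n => n IH.
have := fg n; rewrite /qmul !big_ord_recr /= subnn.
under eq_bigr => i _ do rewrite IH //.
by move/addrI/(mulIf a0).
Qed.

Lemma qexpD x y : qexp (x + y) =1 qmul (qexp x) (qexp y).
Proof. by move=> n; apply: dpowD. Qed.

Lemma qmulCA f g h : qmul f (qmul g h) =1 qmul g (qmul f h).
Proof.
by move=> n; rewrite qmulA (eq_qmul (qmulC f g) (frefl h)) -qmulA.
Qed.

(* (e^X - 1) / X *)
Definition qexpm1X : qseries := fun n => ((n.+1)`!)%:R^-1.

Lemma qexp1E : qexp 1 =1 (fun n => qone n + qshift qexpm1X n).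
Proof. by case=> [|n]; rewrite /qexp dpow1 ?fact0 ?invr1 /qone /= ?addr0 ?add0r. Qed.

Lemma qexpm1X_qsign : qexpm1X =1 qmul (qexp 1) (qsign qexpm1X).
Proof.
move=> n; have := dpowD (R := rat) n.+1 1 (-1).
rewrite addrN dpow_at0 /= big_ord_recr /= subnn dpow0 mulr1.
move/eqP; rewrite eq_sym addr_eq0 => /eqP sum_eq.
have -> : qexpm1X n = - \sum_(i < n.+1) dpow i 1 * dpow (n.+1 - i) (-1).
  by rewrite sum_eq opprK dpow1.
rewrite /qmul -sumrN; apply: eq_bigr => i _.
have le_in : (i <= n)%N by rewrite -ltnS.
by rewrite /qexp /qsign /qexpm1X subSn // dpowN exprS [dpow _.+1 _]dpow1; ring.
Qed.

Definition bern_coef (k : nat) : rat := bernoulli k / (k`!)%:R.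

Lemma size_bern_upto n : size (bern_upto n) = n.+1.
Proof. by elim: n => //= n IH; rewrite size_rcons IH. Qed.

Lemma nth_bern_upto n k : (k <= n)%N -> (bern_upto n)`_k = bernoulli k.
Proof.
elim: n => [|n IH]; first by rewrite leqn0 => /eqP ->.
rewrite leq_eqVlt => /orP [/eqP -> //|]; rewrite ltnS => le_kn /=.
by rewrite nth_rcons size_bern_upto ltnS le_kn IH.
Qed.

Lemma qmul_bern_expm1X : qmul bern_coef qexpm1X =1 qone.
Proof.
case=> [|n].
  by rewrite /qmul big_ord1 /bern_coef /bernoulli /qexpm1X /= !fact0 !invr1 !mulr1.
rewrite /qmul big_ord_recr /= subnn /bern_coef.
have -> : bernoulli n.+1 = - ((n.+1)`!)%:R *
    \sum_(k < n.+1) bernoulli k / ((k`!)%:R * (((n.+1 - k).+1)`!)%:R).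
  rewrite /bernoulli /= nth_rcons size_bern_upto ltnn eqxx.
  by congr (_ * _); apply: eq_bigr => i _; rewrite nth_bern_upto // -ltnS.
rewrite /qexpm1X (_ : 1`! = 1)%N // invr1 mulr1 !mulNr mulrAC mulfV ?natr_fact_neq0 // mul1r.
by rewrite -sumrN -big_split /=; apply: big1 => i _; rewrite invfM mulrA subrr.
Qed.

Lemma qmul_bern_exp1 : qmul bern_coef (qexp 1) =1 (fun n => bern_coef n + qshift qone n).
Proof.
move=> n; rewrite (eq_qmul (frefl _) qexp1E) qmulDr qmulr1; congr (_ + _).
by case: n => [|n]; rewrite ?qmul_qshift ?qmul_bern_expm1X // /qmul big_ord1 /= mulr0.
Qed.

(* B(-X) = B(X) + X: multiplied by (e^X - 1) / X, both sides become e^X. *)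
Lemma bern_coef_sign n : (-1) ^+ n * bern_coef n = bern_coef n + (n == 1)%N%:R.
Proof.
have A0 : qexpm1X 0 != 0 by rewrite invr_eq0 natr_fact_neq0.
have sign_B : qmul (qsign bern_coef) qexpm1X =1 qexp 1.
  move=> k; rewrite (eq_qmul (frefl _) qexpm1X_qsign k) qmulCA.
  have sign_one : qsign (qmul bern_coef qexpm1X) =1 qone.
    by move=> [|j]; rewrite /qsign qmul_bern_expm1X /qone /= ?mulr0 ?expr0 ?mul1r.
  rewrite (eq_qmul (frefl _) (qmul_qsign _ _) k) -[RHS]qmulr1.
  exact: (eq_qmul (frefl _) sign_one k).
have B_exp : qmul (qmul bern_coef (qexp 1)) qexpm1X =1 qexp 1.
  by move=> k; rewrite -qmulA qmulCA (eq_qmul (frefl _) qmul_bern_expm1X k) qmulr1.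
have := qmulIf A0 (fun k => etrans (sign_B k) (esym (B_exp k))) n.
by rewrite qmul_bern_exp1; case: n => [|[|n]].
Qed.

Lemma faulhaber a m :
  \sum_(0 <= v < m) dpow a v%:R + bern_coef a.+1 = qmul (qexp m%:R) bern_coef a.+1.
Proof.
elim: m => [|m IH].
  rewrite big_geq // add0r qmulC -[LHS]qmulr1.
  by apply: (eq_qmul (frefl _)) => k; rewrite /qexp dpow_at0.
rewrite big_nat_recr //= addrAC IH -natr1 (eq_qmul (qexpD _ _) (frefl _)) -qmulA.
rewrite (eq_qmul (frefl _) (qmulC _ _)) (eq_qmul (frefl _) qmul_bern_exp1) qmulDr.
by rewrite qmul_qshift qmulr1.
Qed.

Definition dpow_conv (a b m : nat) : rat :=
  \sum_(1 <= v < m) dpow a v%:R * dpow b (m - v)%:R.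

Definition bern_weight (p q : nat) : rat :=
  (-1) ^+ q * bern_coef (p + q).+1 * ('C(p + q, p))%:R.

Definition bern_part (a b m : nat) : rat :=
  \sum_(n < a.+1) dpow n m%:R * bern_weight (a - n) b.

Definition dpow_conv_bern (a b m : nat) : rat :=
  dpow (a + b).+1 m%:R + bern_part a b m + bern_part b a m.

Lemma dpow_conv_rec a b m :
  m%:R * dpow_conv a b m = a.+1%:R * dpow_conv a.+1 b m + b.+1%:R * dpow_conv a b.+1 m.
Proof.
rewrite /dpow_conv !mulr_sumr -big_split /=; apply: eq_big_nat => v /andP [_ lt_vm].
have -> : m%:R = v%:R + (m - v)%:R :> rat by rewrite -natrD subnKC // ltnW.
transitivity (v%:R * dpow a v%:R * dpow b (m - v)%:R +
               dpow a v%:R * ((m - v)%:R * dpow b (m - v)%:R) : rat); first ring.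
by rewrite !mulr_dpow; ring.
Qed.

Lemma bern_weight_rec p q : p.+1%:R * bern_weight p.+1 q + q.+1%:R * bern_weight p q.+1 = 0.
Proof.
have binS : p.+1%:R * ('C((p + q).+1, p.+1))%:R = q.+1%:R * ('C((p + q).+1, p))%:R :> rat.
  by rewrite -!natrM mul_bin_left -addnS addKn.
rewrite /bern_weight addSn addnS exprS.
transitivity ((-1) ^+ q * bern_coef (p + q).+2 *
  (p.+1%:R * ('C((p + q).+1, p.+1))%:R - q.+1%:R * ('C((p + q).+1, p))%:R)); first ring.
by rewrite binS subrr mulr0.
Qed.

Lemma bern_part_rec a b m :
  a.+1%:R * bern_part a.+1 b m + b.+1%:R * bern_part a b.+1 m = m%:R * bern_part a b m.
Proof.
have shift : a.+1%:R * bern_part a.+1 b m = m%:R * bern_part a b m +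
    \sum_(n < a.+1) ((a - n).+1)%:R * dpow n m%:R * bern_weight (a - n).+1 b.
  rewrite /bern_part !mulr_sumr.
  transitivity (\sum_(n < a.+2) n%:R * (dpow n m%:R * bern_weight (a.+1 - n) b) +
                \sum_(n < a.+2) (a.+1 - n)%:R * (dpow n m%:R * bern_weight (a.+1 - n) b) : rat).
    rewrite -big_split /=; apply: eq_bigr => n _.
    have le_na : (n <= a.+1)%N by rewrite -ltnS.
    by rewrite -mulrDl -natrD subnKC.
  congr (_ + _).
    rewrite big_ord_recl /= mul0r add0r; apply: eq_bigr => n _.
    by rewrite /bump /= add1n mulrA -mulr_dpow subSS; ring.
  rewrite big_ord_recr /= subnn mul0r addr0; apply: eq_bigr => n _.
  have le_na : (n <= a)%N by rewrite -ltnS.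
  by rewrite subSn //; ring.
rewrite shift -addrA -[RHS]addr0; congr (_ + _).
rewrite /bern_part mulr_sumr -big_split big1 // => n _ /=.
rewrite -[RHS](mulr0 (dpow n m%:R)) -(bern_weight_rec (a - n) b); ring.
Qed.

Lemma dpow_conv_bern_rec a b m : m%:R * dpow_conv_bern a b m =
  a.+1%:R * dpow_conv_bern a.+1 b m + b.+1%:R * dpow_conv_bern a b.+1 m.
Proof.
have := bern_part_rec a b m; have := bern_part_rec b a m.
rewrite /dpow_conv_bern !mulrDr mulrC mulr_dpow addSn addnS => <- <-.
have -> : (a + b).+2%:R = a.+1%:R + b.+1%:R :> rat by rewrite -natrD addSn addnS.
ring.
Qed.

Lemma bern_coef0 : bern_coef 0 = 1.
Proof. by rewrite /bern_coef /bernoulli /= divr1. Qed.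

Lemma bern_weight0r p : bern_weight p 0 = bern_coef p.+1.
Proof. by rewrite /bern_weight addn0 binn expr0 mul1r mulr1. Qed.

Lemma bern_weight0l q : bern_weight 0 q = (-1) ^+ q * bern_coef q.+1.
Proof. by rewrite /bern_weight add0n bin0 mulr1. Qed.

Lemma dpow_convE0 a m : (0 < m)%N -> dpow_conv a 0 m = dpow_conv_bern a 0 m.
Proof.
move=> m_gt0; have := faulhaber a m.
rewrite big_ltn // dpow_at0 /qmul big_ord_recr /= subnn bern_coef0 mulr1.
have -> : \sum_(i < a.+1) qexp m%:R i * bern_coef (a.+1 - i) = bern_part a 0 m.
  apply: eq_bigr => i _; rewrite bern_weight0r subSn //.
  by rewrite -ltnS.
have -> : \sum_(1 <= v < m) dpow a v%:R = dpow_conv a 0 m.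
  by apply: eq_bigr => v _; rewrite dpow0 mulr1.
rewrite /dpow_conv_bern addn0.
have -> : bern_part 0 a m = (-1) ^+ a * bern_coef a.+1.
  by rewrite /bern_part big_ord1 subn0 bern_weight0l dpow0 mul1r.
have := bern_coef_sign a.+1; rewrite exprS -mulrA mulN1r eqSS /qexp; lra.
Qed.

Lemma dpow_convE a b m : (0 < m)%N -> dpow_conv a b m = dpow_conv_bern a b m.
Proof.
move=> m_gt0; elim: b a => [|b IH] a; first exact: dpow_convE0.
have := dpow_conv_rec a b m; rewrite (IH a) // (IH a.+1) // dpow_conv_bern_rec.
have bS_neq0 : b.+1%:R != 0 :> rat by rewrite pnatr_eq0.
by move/addrI/esym/(mulfI bS_neq0).
Qed.

Section BigReindex.
Variables (R : Type) (idx : R) (op : Monoid.com_law idx).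

Lemma eq_big_bij (I J : finType) (P : pred I) (Q : pred J) (h : J -> I) (h' : I -> J)
    (F : I -> R) (G : J -> R) :
  (forall j, Q j -> P (h j) /\ h' (h j) = j) ->
  (forall i, P i -> Q (h' i) /\ h (h' i) = i) ->
  (forall j, Q j -> F (h j) = G j) ->
  \big[op/idx]_(i | P i) F i = \big[op/idx]_(j | Q j) G j.
Proof.
move=> hQ hP FG; rewrite (reindex_onto h h' (fun i Pi => (hP i Pi).2)).
apply: eq_big => [j|j /andP [Phj /eqP hK]]; last by apply: FG; rewrite -hK (hP _ Phj).1.
apply/andP/idP => [[Phj /eqP <-]|Qj]; first exact: (hP _ Phj).1.
by have [-> ->] := hQ _ Qj.
Qed.

Variable A : finType.

Lemma big_ffun1 (P : pred {ffun 'I_1 -> A}) (F : {ffun 'I_1 -> A} -> R) :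
  \big[op/idx]_(f | P f) F f = \big[op/idx]_(a | P [ffun=> a]) F [ffun=> a].
Proof.
apply: reindex; apply: onW_bij.
exists (fun f : {ffun 'I_1 -> A} => f ord0) => [a|f]; first by rewrite ffunE.
by apply/ffunP => i; rewrite ffunE (ord1 i).
Qed.

Definition ffun_of_pair (p : A * A) : {ffun 'I_2 -> A} :=
  [ffun i : 'I_2 => if i == ord0 then p.1 else p.2].

Lemma ord2P (i : 'I_2) : i = ord0 \/ i = ord_max.
Proof. by case: i => [[|[|k]] lt_i2]; [left; apply: val_inj|right; apply: val_inj|]. Qed.

Lemma big_ffun2 (P : pred {ffun 'I_2 -> A}) (F : {ffun 'I_2 -> A} -> R) :
  \big[op/idx]_(f | P f) F f =
  \big[op/idx]_(p | P (ffun_of_pair p)) F (ffun_of_pair p).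
Proof.
apply: reindex; apply: onW_bij.
exists (fun f : {ffun 'I_2 -> A} => (f ord0, f ord_max)) => [[x y]|f]; first by rewrite !ffunE.
by apply/ffunP => i; rewrite ffunE; case: (ord2P i) => ->.
Qed.

End BigReindex.
Arguments eq_big_bij {R idx op I J P Q} h h' {F G}.

Lemma forall_ord1 (P : pred 'I_1) : [forall i, P i] = P ord0.
Proof. by apply/forallP/idP => [|P0 i]; [apply|rewrite (ord1 i)]. Qed.

Lemma forall_ord2 (P : pred 'I_2) : [forall i, P i] = P ord0 && P ord_max.
Proof.
apply/forallP/andP => [PP|[P0 P1] i]; first by split; apply: PP.
by case: (ord2P i) => ->.
Qed.

Definition bterm (s r u v : nat) : rat := dpow r u%:R * dpow s.-1 v%:R.

Definition bterm2 (s1 r1 s2 r2 u1 u2 v1 v2 : nat) : rat :=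
  bterm s1 r1 u1 v1 * bterm s2 r2 u2 v2.

Lemma btermE s r u v :
  (u ^ r)%:R / (r`!)%:R * (v ^ s.-1)%:R / ((s.-1)`!)%:R = bterm s r u v.
Proof. by rewrite /bterm /dpow !natrX mulrA. Qed.

Definition bsum1 (K n : nat) (G : nat -> nat -> rat) : rat :=
  \sum_(x : 'I_K.+1 * 'I_K.+1 | [&& 0 < x.1, 0 < x.2 & x.1 * x.2 == n]%N) G x.1 x.2.

Definition quad N := (('I_N.+1 * 'I_N.+1) * ('I_N.+1 * 'I_N.+1))%type.

Definition quad_dom N (x : quad N) : bool :=
  [&& 0 < x.1.1, 0 < x.1.2, 0 < x.2.1, 0 < x.2.2 &
      x.1.1 * x.2.1 + x.1.2 * x.2.2 == N]%N.

Definition bsum2 N (P : nat -> nat -> nat -> nat -> bool)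
    (G : nat -> nat -> nat -> nat -> rat) : rat :=
  \sum_(x : quad N | quad_dom x && P x.1.1 x.1.2 x.2.1 x.2.2) G x.1.1 x.1.2 x.2.1 x.2.2.

Lemma bibracket1E s r N : bibracket [:: s] [:: r] N = bsum1 N N (bterm s r).
Proof.
rewrite /bibracket /= big_ffun1.
under eq_bigr do rewrite big_ffun1.
rewrite pair_big_dep /=; apply: eq_big => [[u v]|[u v] _] /=.
  by rewrite !forall_ord1 big_ord1 !ffunE; case: (0 < u)%N; case: (0 < v)%N.
by rewrite big_ord1 !ffunE btermE.
Qed.

Lemma bibracket2E s1 s2 r1 r2 N : bibracket [:: s1; s2] [:: r1; r2] N =
  bsum2 N (fun u1 u2 _ _ => (u2 < u1)%N) (bterm2 s1 r1 s2 r2).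
Proof.
rewrite /bibracket /= big_ffun2.
under eq_bigr do rewrite big_ffun2.
rewrite pair_big_dep /=; apply: eq_big => [[[u1 u2] [v1 v2]]|[[u1 u2] [v1 v2]] _] /=.
  rewrite !forall_ord2 big_ord_recr big_ord1 /= !ffunE /= /quad_dom /= andbT.
  by case: (0 < u1)%N; case: (0 < u2)%N; case: (0 < v1)%N; case: (0 < v2)%N;
     case: (u2 < u1)%N; case: (_ == N).
by rewrite big_ord_recr big_ord1 /= !ffunE /= /bterm2 !btermE.
Qed.

Lemma bsum1_widen K n G : (n <= K)%N -> bsum1 n n G = bsum1 K n G.
Proof.
move=> le_nK; apply: (eq_big_bij (fun x : 'I_K.+1 * 'I_K.+1 => (inord x.1, inord x.2))
   (fun x : 'I_n.+1 * 'I_n.+1 => (inord x.1, inord x.2))).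
- move=> [u v] /= /and3P [u_gt0 v_gt0 /eqP uv_n].
  have [le_un le_vn] : (u <= n /\ v <= n)%N by split; nia.
  rewrite !inordK ?ltnS ?(leq_trans _ le_nK) // u_gt0 v_gt0 uv_n eqxx.
  by split=> //; congr (_, _); apply: val_inj; rewrite /= inordK.
- move=> [u v] /= /and3P [u_gt0 v_gt0 /eqP uv_n].
  have [lt_uK lt_vK] : (u < K.+1 /\ v < K.+1)%N.
    by split; apply: leq_trans (ltn_ord _) _; rewrite ltnS.
  rewrite !inordK // u_gt0 v_gt0 uv_n eqxx.
  by split=> //; congr (_, _); apply: val_inj; rewrite /= !inordK.
- by move=> [u v] /= /and3P [u_gt0 v_gt0 /eqP uv_n]; rewrite !inordK //; nia.
Qed.

Lemma qmul_bibracket1E s1 r1 s2 r2 N :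
  qmul (bibracket [:: s1] [:: r1]) (bibracket [:: s2] [:: r2]) N =
  bsum2 N (fun _ _ _ _ => true) (bterm2 s1 r1 s2 r2).
Proof.
transitivity (\sum_(i < N.+1) bsum1 N i (bterm s1 r1) * bsum1 N (N - i) (bterm s2 r2)).
  apply: eq_bigr => i _; rewrite !bibracket1E.
  by rewrite (@bsum1_widen N (N - i)) ?leq_subr // (@bsum1_widen N i) // -ltnS.
rewrite /bsum1; under eq_bigr do rewrite big_distrl /=.
under eq_bigr do under eq_bigr do rewrite big_distrr /=.
under eq_bigr do rewrite pair_big_dep /=.
rewrite pair_big_dep /= /bsum2; symmetry.
apply: (eq_big_bij
  (fun p : 'I_N.+1 * (('I_N.+1 * 'I_N.+1) * ('I_N.+1 * 'I_N.+1)) =>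
     ((p.2.1.1, p.2.2.1), (p.2.1.2, p.2.2.2)) : quad N)
  (fun z : quad N => (inord (z.1.1 * z.2.1), ((z.1.1, z.2.1), (z.1.2, z.2.2))))).
- move=> [i [[u1 v1] [u2 v2]]] /= /and4P [/and3P [u1_gt0 v1_gt0 /eqP prod1] u2_gt0 v2_gt0].
  move=> /eqP prod2.
  have le_iN : (i <= N)%N by rewrite -ltnS.
  rewrite /quad_dom /= u1_gt0 v1_gt0 u2_gt0 v2_gt0 andbT prod1 prod2 subnKC //.
  by rewrite eqxx; split=> //; congr (_, _); apply: val_inj; rewrite /= inordK.
- move=> [[u1 u2] [v1 v2]]; rewrite /quad_dom /= andbT.
  move=> /and5P [u1_gt0 u2_gt0 v1_gt0 v2_gt0 /eqP sum_N].
  have lt_u1v1 : (u1 * v1 < N.+1)%N by nia.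
  rewrite inordK // u1_gt0 u2_gt0 v1_gt0 v2_gt0 eqxx; split=> //; apply/eqP; lia.
- by [].
Qed.

Lemma sum_ord_nat_range n m (F : nat -> rat) : (m <= n)%N ->
  \sum_(v < n | (0 < v < m)%N) F v = \sum_(1 <= v < m) F v.
Proof.
move=> le_mn; rewrite big_geq_mkord (big_ord_widen_cond _ _ _ le_mn).
by apply: eq_bigl => v; rewrite andbC.
Qed.

Section BsumAlgebra.
Variable N : nat.
Implicit Types (P A : nat -> nat -> nat -> nat -> bool) (G : nat -> nat -> nat -> nat -> rat).

Lemma bsum2_split P A G : bsum2 N P G =
  bsum2 N (fun a b c d => P a b c d && A a b c d) G +
  bsum2 N (fun a b c d => P a b c d && ~~ A a b c d) G.
Proof.
rewrite /bsum2 (bigID (fun x : quad N => A x.1.1 x.1.2 x.2.1 x.2.2)) /=.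
by congr (_ + _); apply: eq_bigl => x; rewrite andbA.
Qed.

Lemma eq_bsum2l P P' G : (forall a b c d, P a b c d = P' a b c d) ->
  bsum2 N P G = bsum2 N P' G.
Proof. by move=> PP'; apply: eq_bigl => x; rewrite PP'. Qed.

Lemma eq_bsum2r P G G' :
  (forall a b c d, (0 < a)%N -> (0 < b)%N -> (0 < c)%N -> (0 < d)%N ->
     (a * c + b * d = N)%N -> P a b c d -> G a b c d = G' a b c d) ->
  bsum2 N P G = bsum2 N P G'.
Proof.
move=> GG'; apply: eq_bigr => [[[a b] [c d]]] /andP [].
by rewrite /quad_dom /= => /and5P [? ? ? ? /eqP ?]; apply: GG'.
Qed.

Lemma bsum2_sum P (I : Type) (r : seq I) (F : I -> nat -> nat -> nat -> nat -> rat) :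
  bsum2 N P (fun a b c d => \sum_(j <- r) F j a b c d) = \sum_(j <- r) bsum2 N P (F j).
Proof. exact: exchange_big. Qed.

Lemma bsum2_mull P k G : bsum2 N P (fun a b c d => k * G a b c d) = k * bsum2 N P G.
Proof. by rewrite /bsum2 mulr_sumr. Qed.

Lemma bsum2_swap P G : bsum2 N P G =
  bsum2 N (fun a b c d => P b a d c) (fun a b c d => G b a d c).
Proof.
pose swap (x : quad N) := ((x.1.2, x.1.1), (x.2.2, x.2.1)).
apply: (eq_big_bij swap swap) => // -[[a b] [c d]];
  by rewrite /quad_dom /= addnC => /andP [/and5P [-> -> -> -> ->] ->].
Qed.

Lemma bsum2_swap_uv P G : bsum2 N P G =
  bsum2 N (fun a b c d => P c d a b) (fun a b c d => G c d a b).
Proof.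
pose swap (x : quad N) := (x.2, x.1).
apply: (eq_big_bij swap swap) => // -[[a b] [c d]];
  by rewrite /quad_dom /= mulnC [(d * _)%N]mulnC => /andP [/and5P [-> -> -> -> ->] ->].
Qed.

Lemma bsum2_trichotomy (f g : nat -> nat -> nat -> nat -> nat) G :
  bsum2 N (fun _ _ _ _ => true) G =
  bsum2 N (fun a b c d => g a b c d < f a b c d)%N G +
  bsum2 N (fun a b c d => f a b c d < g a b c d)%N G +
  bsum2 N (fun a b c d => f a b c d == g a b c d) G.
Proof.
rewrite (bsum2_split _ (fun a b c d => g a b c d < f a b c d)%N).
rewrite (bsum2_split (fun a b c d => true && ~~ (g a b c d < f a b c d)%N)
                     (fun a b c d => f a b c d < g a b c d)%N) addrA.
by congr (_ + _ + _); apply: eq_bsum2l => a b c d /=; case: ltngtP.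
Qed.

Implicit Types (H : nat -> nat -> rat).

Lemma eq_bsum1r H H' :
  (forall u v, (0 < u)%N -> (0 < v)%N -> (u * v = N)%N -> H u v = H' u v) ->
  bsum1 N N H = bsum1 N N H'.
Proof. by move=> HH'; apply: eq_bigr => -[u v] /and3P [? ? /eqP ?]; apply: HH'. Qed.

Lemma bsum1_sum (I : Type) (r : seq I) (F : I -> nat -> nat -> rat) :
  bsum1 N N (fun u v => \sum_(j <- r) F j u v) = \sum_(j <- r) bsum1 N N (F j).
Proof. exact: exchange_big. Qed.

Lemma bsum1_mull k H : bsum1 N N (fun u v => k * H u v) = k * bsum1 N N H.
Proof. by rewrite /bsum1 mulr_sumr. Qed.

Lemma bsum1_add H H' :
  bsum1 N N (fun u v => H u v + H' u v) = bsum1 N N H + bsum1 N N H'.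
Proof. exact: big_split. Qed.

Lemma bsum1_swap H : bsum1 N N H = bsum1 N N (fun u v => H v u).
Proof.
pose swap (x : 'I_N.+1 * 'I_N.+1) := (x.2, x.1).
by apply: (eq_big_bij swap swap) => // -[u v]; rewrite /= mulnC => /and3P [-> -> ->].
Qed.

Lemma bsum2_diag G : bsum2 N (fun a b _ _ => a == b) G =
  bsum1 N N (fun u m => \sum_(1 <= v < m) G u u v (m - v)%N).
Proof.
rewrite /bsum2 (partition_big (fun x : quad N => (x.1.1, inord (x.2.1 + x.2.2)))
  (fun y : 'I_N.+1 * 'I_N.+1 => [&& 0 < y.1, 0 < y.2 & y.1 * y.2 == N]%N)); last first.
  move=> [[a b] [c d]] /andP [] /=.
  rewrite /quad_dom /= => /and5P [a_gt0 _ c_gt0 d_gt0 /eqP sum_N].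
  move=> /eqP/val_inj ab; subst b; rewrite inordK; last by nia.
  by rewrite a_gt0 /=; apply/andP; split; [lia|apply/eqP; nia].
apply: eq_bigr => -[u m] /and3P [/= u_gt0 m_gt0 /eqP um_N].
rewrite -(@sum_ord_nat_range N.+1); last by nia.
apply: (eq_big_bij (fun v : 'I_N.+1 => (((u, u), (v, inord (m - v))) : quad N))
                   (fun x : quad N => x.2.1)).
- move=> v /andP [v_gt0 lt_vm] /=.
  rewrite /quad_dom /= inordK; last by nia.
  rewrite u_gt0 v_gt0 eqxx /= andbT subnKC ?(ltnW lt_vm) // -mulnDr subnKC ?(ltnW lt_vm) //.
  rewrite um_N eqxx subn_gt0 lt_vm; split=> //.
  by rewrite xpair_eqE eqxx; apply/eqP/val_inj; rewrite /= inordK.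
- move=> [[a b] [c d]] /= /andP [/andP [] ].
  rewrite /quad_dom /= => /and5P [a_gt0 _ c_gt0 d_gt0 /eqP sum_N] /eqP/val_inj ab.
  move=> /eqP [ua /(congr1 val)]; subst b u; rewrite /= inordK; last by nia.
  move=> cd_m; rewrite c_gt0 /=; split; first by lia.
  have lt_mN := ltn_ord m.
  by congr ((_, _), (_, _)); apply: val_inj; rewrite /= inordK; lia.
- by move=> v _; rewrite /= inordK // (leq_ltn_trans (leq_subr _ _) (ltn_ord m)).
Qed.

Lemma bsum2_shear G : bsum2 N (fun _ _ c d => (d < c)%N) G =
  bsum2 N (fun a b _ _ => (b < a)%N) (fun a b c d => G b (a - b)%N (c + d)%N c).
Proof.
apply: (eq_big_bij
  (fun x : quad N => ((x.1.2, inord (x.1.1 - x.1.2)), (inord (x.2.1 + x.2.2), x.2.1)))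
  (fun x : quad N => ((inord (x.1.1 + x.1.2), x.1.1), (x.2.2, inord (x.2.1 - x.2.2))))).
- move=> [[a b] [c d]]; rewrite /quad_dom /=.
  move=> /andP [/and5P [a_gt0 b_gt0 c_gt0 d_gt0 /eqP sum_N] lt_ba].
  have lt_aN := ltn_ord a.
  rewrite !inordK; try nia.
  split; last by congr ((_, _), (_, _)); apply: val_inj; rewrite /= !inordK; nia.
  by repeat (apply/andP; split); try lia; apply/eqP; nia.
- move=> [[a b] [c d]]; rewrite /quad_dom /=.
  move=> /andP [/and5P [a_gt0 b_gt0 c_gt0 d_gt0 /eqP sum_N] lt_dc].
  have lt_cN := ltn_ord c.
  rewrite !inordK; try nia.
  split; last by congr ((_, _), (_, _)); apply: val_inj; rewrite /= !inordK; nia.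
  by repeat (apply/andP; split); try lia; apply/eqP; nia.
- move=> [[a b] [c d]]; rewrite /quad_dom /= => /andP [/and5P [a_gt0 b_gt0 _ _ /eqP sum_N] _].
  have lt_aN := ltn_ord a.
  by rewrite !inordK //; nia.
Qed.

End BsumAlgebra.

Lemma dpow_natB r x y : (y <= x)%N -> dpow r (x - y)%N%:R =
  \sum_(k < r.+1) dpow k x%:R * ((-1) ^+ (r - k) * dpow (r - k) y%:R) :> rat.
Proof. by move=> le_yx; rewrite natrB // dpowD; apply: eq_bigr => k _; rewrite dpowN. Qed.

Lemma sum_bterm2_eq_u s1 s2 r1 r2 u m : (0 < m)%N ->
  \sum_(1 <= v < m) bterm2 s1 r1 s2 r2 u u v (m - v) =
  ('C(r1 + r2, r1))%:R * (dpow (r1 + r2) u%:R * dpow_conv_bern s1.-1 s2.-1 m).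
Proof.
move=> m_gt0; rewrite -dpow_convE // mulrA -dpowM mulr_sumr.
by apply: eq_bigr => v _; rewrite /bterm2 /bterm; ring.
Qed.

Lemma sum_bterm2_eq_v s1 s2 r1 r2 v m : (0 < m)%N ->
  \sum_(1 <= u < m) bterm2 s1 r1 s2 r2 u (m - u) v v =
  ('C(s1.-1 + s2.-1, s1.-1))%:R * (dpow (s1.-1 + s2.-1) v%:R * dpow_conv_bern r1 r2 m).
Proof.
move=> m_gt0; rewrite -dpow_convE // mulrA -dpowM mulr_sumr.
by apply: eq_bigr => u _; rewrite /bterm2 /bterm; ring.
Qed.

Lemma bterm2_shear_lt s1 s2 r1 r2 U1 U2 V1 V2 :
  (0 < s1)%N -> (0 < s2)%N -> (U2 < U1)%N ->
  bterm2 s1 r1 s2 r2 U2 (U1 - U2) (V1 + V2) V1 =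
  \sum_(1 <= j < s1.+1) \sum_(0 <= k < r2.+1)
    (('C(s1 + s2 - j - 1, s1 - j))%:R * ('C(r1 + r2 - k, r1))%:R * (-1) ^+ (r2 - k)
     * bterm2 (s1 + s2 - j) k j (r1 + r2 - k) U1 U2 V1 V2).
Proof.
case: s1 s2 => [|a] [|b] // _ _ lt_U.
rewrite /bterm2 /bterm /= (dpow_natB _ (ltnW lt_U)) natrD addrC dpowD.
rewrite big_add1 /= big_mkord mulr_sumr mulr_suml; apply: eq_bigr => i _.
rewrite big_mkord mulr_suml mulr_sumr; apply: eq_bigr => k _.
have le_ia : (i <= a)%N by rewrite -ltnS.
have le_kr2 : (k <= r2)%N by rewrite -ltnS.
have -> : (a.+1 + b.+1 - i.+1 - 1)%N = (a - i + b)%N by lia.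
have -> : (a.+1 - i.+1)%N = (a - i)%N by lia.
have -> : (a.+1 + b.+1 - i.+1).-1 = (a - i + b)%N by lia.
have -> : (r1 + r2 - k)%N = (r1 + (r2 - k))%N by lia.
transitivity ((-1) ^+ (r2 - k) * dpow k U1%:R * dpow i V2%:R
   * (dpow r1 U2%:R * dpow (r2 - k) U2%:R) * (dpow (a - i) V1%:R * dpow b V1%:R) : rat).
  ring.
by rewrite !dpowM; ring.
Qed.

Lemma bterm2_shear_gt s1 s2 r1 r2 U1 U2 V1 V2 :
  (0 < s1)%N -> (0 < s2)%N -> (U2 < U1)%N ->
  bterm2 s1 r1 s2 r2 (U1 - U2) U2 V1 (V1 + V2) =
  \sum_(1 <= j < s2.+1) \sum_(0 <= k < r1.+1)
    (('C(s1 + s2 - j - 1, s1 - 1))%:R * ('C(r1 + r2 - k, r1 - k))%:R * (-1) ^+ (r1 - k)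
     * bterm2 (s1 + s2 - j) k j (r1 + r2 - k) U1 U2 V1 V2).
Proof.
case: s1 s2 => [|a] [|b] // _ _ lt_U.
rewrite /bterm2 /bterm /= (dpow_natB _ (ltnW lt_U)) natrD addrC dpowD.
rewrite mulrC big_add1 /= big_mkord mulr_sumr mulr_suml; apply: eq_bigr => i _.
rewrite big_mkord mulr_suml mulr_sumr; apply: eq_bigr => k _.
have le_ib : (i <= b)%N by rewrite -ltnS.
have le_kr1 : (k <= r1)%N by rewrite -ltnS.
have -> : (a.+1 + b.+1 - i.+1 - 1)%N = (a + (b - i))%N by lia.
have -> : (a.+1 - 1)%N = a by lia.
have -> : (a.+1 + b.+1 - i.+1).-1 = (a + (b - i))%N by lia.
have -> : (r1 + r2 - k)%N = (r1 - k + r2)%N by lia.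
transitivity ((-1) ^+ (r1 - k) * dpow k U1%:R * dpow i V2%:R
   * (dpow (r1 - k) U2%:R * dpow r2 U2%:R) * (dpow a V1%:R * dpow (b - i) V1%:R) : rat).
  ring.
by rewrite !dpowM; ring.
Qed.

Lemma bsum2_bterm2_eq_u s1 s2 r1 r2 N : (0 < s1)%N -> (0 < s2)%N ->
  bsum2 N (fun a b _ _ => a == b) (bterm2 s1 r1 s2 r2) =
  ('C(r1 + r2, r1))%:R * (bibracket [:: (s1 + s2)%N] [:: (r1 + r2)%N] N
    + \sum_(1 <= j < s1.+1) bern_weight (s1 - j) s2.-1 * bibracket [:: j] [:: (r1 + r2)%N] N
    + \sum_(1 <= j < s2.+1) bern_weight (s2 - j) s1.-1 * bibracket [:: j] [:: (r1 + r2)%N] N).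
Proof.
case: s1 s2 => [|a] [|b] // _ _; rewrite bsum2_diag !big_add1 !big_mkord /=.
rewrite (eq_bsum1r (H' := fun u m => ('C(r1 + r2, r1))%:R * (bterm (a.+1 + b.+1) (r1 + r2) u m
    + \sum_(j < a.+1) bern_weight (a - j) b * bterm j.+1 (r1 + r2) u m
    + \sum_(j < b.+1) bern_weight (b - j) a * bterm j.+1 (r1 + r2) u m))).
  rewrite bsum1_mull !bsum1_add !bsum1_sum !bibracket1E.
  by congr (_ * (_ + _ + _)); apply: eq_bigr => j _; rewrite bsum1_mull bibracket1E.
move=> u m _ m_gt0 _; rewrite sum_bterm2_eq_u //; congr (_ * _).
rewrite /dpow_conv_bern /bern_part /bterm !mulrDr !mulr_sumr addSn addnS /=.
by congr (_ + _ + _); apply: eq_bigr => j _; ring.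
Qed.

Lemma bsum2_bterm2_eq_v s1 s2 r1 r2 N : (0 < s1)%N -> (0 < s2)%N ->
  bsum2 N (fun _ _ c d => c == d) (bterm2 s1 r1 s2 r2) =
  ('C(s1 + s2 - 2, s1 - 1))%:R * (bibracket [:: (s1 + s2 - 1)%N] [:: (r1 + r2 + 1)%N] N
    + \sum_(0 <= j < r1.+1) bern_weight (r1 - j) r2 * bibracket [:: (s1 + s2 - 1)%N] [:: j] N
    + \sum_(0 <= j < r2.+1) bern_weight (r2 - j) r1 * bibracket [:: (s1 + s2 - 1)%N] [:: j] N).
Proof.
case: s1 s2 => [|a] [|b] // _ _.
rewrite bsum2_swap_uv /= bsum2_diag bsum1_swap !big_mkord.
have -> : (a.+1 + b.+1 - 2 = a + b)%N by lia.
have -> : (a.+1 + b.+1 - 1 = (a + b).+1)%N by lia.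
rewrite subn1 /= addn1.
rewrite (eq_bsum1r (H' := fun m v => ('C(a + b, a))%:R * (bterm (a + b).+1 (r1 + r2).+1 m v
    + \sum_(j < r1.+1) bern_weight (r1 - j) r2 * bterm (a + b).+1 j m v
    + \sum_(j < r2.+1) bern_weight (r2 - j) r1 * bterm (a + b).+1 j m v))).
  rewrite bsum1_mull !bsum1_add !bsum1_sum !bibracket1E.
  by congr (_ * (_ + _ + _)); apply: eq_bigr => j _; rewrite bsum1_mull bibracket1E.
move=> m v m_gt0 _ _; rewrite sum_bterm2_eq_v //; congr (_ * _).
rewrite /dpow_conv_bern /bern_part /bterm !mulrDr !mulr_sumr /=.
by congr (_ + _ + _); try apply: eq_bigr => j _; ring.
Qed.

Lemma bern_weightE p q : bern_weight p q =
  (-1) ^+ q * bernoulli (p + q).+1 / (((p + q).+1)`!)%:R * ('C(p + q, p))%:R.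
Proof. by rewrite /bern_weight /bern_coef mulrA. Qed.

Lemma bern_weight_sub s t j : (0 < j <= s)%N -> (0 < t)%N ->
  bern_weight (s - j) (t - 1) = (-1) ^+ (t - 1) * bernoulli (s + t - j)
    / ((s + t - j)`!)%:R * ('C(s + t - j - 1, s - j))%:R.
Proof.
move=> /andP [j_gt0 le_js] t_gt0; rewrite bern_weightE.
have -> : (s - j + (t - 1) = s + t - j - 1)%N by lia.
by have -> : (s + t - j - 1).+1 = (s + t - j)%N by lia.
Qed.

Lemma qmul_bibracket1_u s1 s2 r1 r2 N : (0 < s1)%N -> (0 < s2)%N ->
    qmul (bibracket [:: s1] [:: r1]) (bibracket [:: s2] [:: r2]) N =
      bibracket [:: s1; s2] [:: r1; r2] N
    + bibracket [:: s2; s1] [:: r2; r1] N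
    + ('C(r1 + r2, r1))%:R * bibracket [:: (s1 + s2)%N] [:: (r1 + r2)%N] N
    + ('C(r1 + r2, r1))%:R *
      \sum_(1 <= j < s1.+1)
        ((-1) ^+ (s2 - 1)%N * bernoulli (s1 + s2 - j)%N / ((s1 + s2 - j)%N`!)%:R
         * ('C(s1 + s2 - j - 1, s1 - j))%:R * bibracket [:: j] [:: (r1 + r2)%N] N)
    + ('C(r1 + r2, r1))%:R *
      \sum_(1 <= j < s2.+1)
        ((-1) ^+ (s1 - 1)%N * bernoulli (s1 + s2 - j)%N / ((s1 + s2 - j)%N`!)%:R
         * ('C(s1 + s2 - j - 1, s2 - j))%:R * bibracket [:: j] [:: (r1 + r2)%N] N).
Proof.
move=> s1_gt0 s2_gt0.
rewrite qmul_bibracket1E (bsum2_trichotomy _ (fun a _ _ _ => a) (fun _ b _ _ => b)) /=.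
rewrite bsum2_bterm2_eq_u // !mulrDr !addrA !bibracket2E.
rewrite (bsum2_swap _ _ (bterm2 s2 r2 s1 r1)).
congr (_ + _ + _ + (_ * _) + (_ * _)).
- by apply: eq_bsum2r => *; rewrite /bterm2 mulrC.
- by apply: eq_big_nat => j j_range; rewrite -subn1 bern_weight_sub.
- by apply: eq_big_nat => j j_range; rewrite -subn1 bern_weight_sub // addnC.
Qed.

Lemma qmul_bibracket1_v s1 s2 r1 r2 N : (0 < s1)%N -> (0 < s2)%N ->
    qmul (bibracket [:: s1] [:: r1]) (bibracket [:: s2] [:: r2]) N =
      \sum_(1 <= j < s1.+1) \sum_(0 <= k < r2.+1)
        (('C(s1 + s2 - j - 1, s1 - j))%:R * ('C(r1 + r2 - k, r1))%:R
         * (-1) ^+ (r2 - k)%N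
         * bibracket [:: (s1 + s2 - j)%N; j] [:: k; (r1 + r2 - k)%N] N)
    + \sum_(1 <= j < s2.+1) \sum_(0 <= k < r1.+1)
        (('C(s1 + s2 - j - 1, s1 - 1))%:R * ('C(r1 + r2 - k, r1 - k))%:R
         * (-1) ^+ (r1 - k)%N
         * bibracket [:: (s1 + s2 - j)%N; j] [:: k; (r1 + r2 - k)%N] N)
    + ('C(s1 + s2 - 2, s1 - 1))%:R
        * bibracket [:: (s1 + s2 - 1)%N] [:: (r1 + r2 + 1)%N] N
    + ('C(s1 + s2 - 2, s1 - 1))%:R *
      \sum_(0 <= j < r1.+1)
        ((-1) ^+ r2 * bernoulli (r1 + r2 - j + 1)%N / ((r1 + r2 - j + 1)%N`!)%:R
         * ('C(r1 + r2 - j, r1 - j))%:R * bibracket [:: (s1 + s2 - 1)%N] [:: j] N)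
    + ('C(s1 + s2 - 2, s1 - 1))%:R *
      \sum_(0 <= j < r2.+1)
        ((-1) ^+ r1 * bernoulli (r1 + r2 - j + 1)%N / ((r1 + r2 - j + 1)%N`!)%:R
         * ('C(r1 + r2 - j, r2 - j))%:R * bibracket [:: (s1 + s2 - 1)%N] [:: j] N).
Proof.
move=> s1_gt0 s2_gt0.
rewrite qmul_bibracket1E (bsum2_trichotomy _ (fun _ _ c _ => c) (fun _ _ _ d => d)) /=.
rewrite bsum2_bterm2_eq_v // !mulrDr !addrA.
rewrite (bsum2_swap _ (fun _ _ c d => c < d)%N) /= !bsum2_shear.
congr (_ + _ + _ + (_ * _) + (_ * _)).
- rewrite (eq_bsum2r (G' := fun U1 U2 V1 V2 => \sum_(1 <= j < s1.+1) \sum_(0 <= k < r2.+1)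
    (('C(s1 + s2 - j - 1, s1 - j))%:R * ('C(r1 + r2 - k, r1))%:R * (-1) ^+ (r2 - k)
     * bterm2 (s1 + s2 - j) k j (r1 + r2 - k) U1 U2 V1 V2))).
    rewrite bsum2_sum; apply: eq_bigr => j _; rewrite bsum2_sum; apply: eq_bigr => k _.
    by rewrite bsum2_mull bibracket2E.
  by move=> *; apply: bterm2_shear_lt.
- rewrite (eq_bsum2r (G' := fun U1 U2 V1 V2 => \sum_(1 <= j < s2.+1) \sum_(0 <= k < r1.+1)
    (('C(s1 + s2 - j - 1, s1 - 1))%:R * ('C(r1 + r2 - k, r1 - k))%:R * (-1) ^+ (r1 - k)
     * bterm2 (s1 + s2 - j) k j (r1 + r2 - k) U1 U2 V1 V2))).
    rewrite bsum2_sum; apply: eq_bigr => j _; rewrite bsum2_sum; apply: eq_bigr => k _.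
    by rewrite bsum2_mull bibracket2E.
  by move=> *; apply: bterm2_shear_gt.
- apply: eq_big_nat => j /andP [_ lt_jr1]; rewrite bern_weightE.
  have -> : (r1 + r2 - j = r1 - j + r2)%N by lia.
  by rewrite addn1.
- apply: eq_big_nat => j /andP [_ lt_jr2]; rewrite bern_weightE.
  have -> : (r1 + r2 - j = r2 - j + r1)%N by lia.
  by rewrite addn1.
Qed.

Theorem proposition3p3 (s1 s2 r1 r2 : nat) :
  (0 < s1)%N -> (0 < s2)%N ->
  (* (i) *)
  (forall N : nat,
    qmul (bibracket [:: s1] [:: r1]) (bibracket [:: s2] [:: r2]) N =
      bibracket [:: s1; s2] [:: r1; r2] N
    + bibracket [:: s2; s1] [:: r2; r1] N
    + ('C(r1 + r2, r1))%:R * bibracket [:: (s1 + s2)%N] [:: (r1 + r2)%N] N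
    + ('C(r1 + r2, r1))%:R *
      \sum_(1 <= j < s1.+1)
        ((-1) ^+ (s2 - 1)%N * bernoulli (s1 + s2 - j)%N / ((s1 + s2 - j)%N`!)%:R
         * ('C(s1 + s2 - j - 1, s1 - j))%:R * bibracket [:: j] [:: (r1 + r2)%N] N)
    + ('C(r1 + r2, r1))%:R *
      \sum_(1 <= j < s2.+1)
        ((-1) ^+ (s1 - 1)%N * bernoulli (s1 + s2 - j)%N / ((s1 + s2 - j)%N`!)%:R
         * ('C(s1 + s2 - j - 1, s2 - j))%:R * bibracket [:: j] [:: (r1 + r2)%N] N))
  /\
  (* (ii) *)
  (forall N : nat,
    qmul (bibracket [:: s1] [:: r1]) (bibracket [:: s2] [:: r2]) N =
      \sum_(1 <= j < s1.+1) \sum_(0 <= k < r2.+1)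
        (('C(s1 + s2 - j - 1, s1 - j))%:R * ('C(r1 + r2 - k, r1))%:R
         * (-1) ^+ (r2 - k)%N
         * bibracket [:: (s1 + s2 - j)%N; j] [:: k; (r1 + r2 - k)%N] N)
    + \sum_(1 <= j < s2.+1) \sum_(0 <= k < r1.+1)
        (('C(s1 + s2 - j - 1, s1 - 1))%:R * ('C(r1 + r2 - k, r1 - k))%:R
         * (-1) ^+ (r1 - k)%N
         * bibracket [:: (s1 + s2 - j)%N; j] [:: k; (r1 + r2 - k)%N] N)
    + ('C(s1 + s2 - 2, s1 - 1))%:R
        * bibracket [:: (s1 + s2 - 1)%N] [:: (r1 + r2 + 1)%N] N
    + ('C(s1 + s2 - 2, s1 - 1))%:R *
      \sum_(0 <= j < r1.+1)
        ((-1) ^+ r2 * bernoulli (r1 + r2 - j + 1)%N / ((r1 + r2 - j + 1)%N`!)%:R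
         * ('C(r1 + r2 - j, r1 - j))%:R * bibracket [:: (s1 + s2 - 1)%N] [:: j] N)
    + ('C(s1 + s2 - 2, s1 - 1))%:R *
      \sum_(0 <= j < r2.+1)
        ((-1) ^+ r1 * bernoulli (r1 + r2 - j + 1)%N / ((r1 + r2 - j + 1)%N`!)%:R
         * ('C(r1 + r2 - j, r2 - j))%:R * bibracket [:: (s1 + s2 - 1)%N] [:: j] N)).
Proof.
by move=> s1_gt0 s2_gt0; split=> N; [apply: qmul_bibracket1_u | apply: qmul_bibracket1_v].
Qed.
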